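(* Let $\Gamma$ be a finite group, $\mathcal{A}$ a category, $\mathcal{A}'$ a pointed category with finite products equipped with a pseudo-action of $\Gamma$, and $f^*:\mathcal{A}\to\mathcal{A}'$ a $\Gamma$-equivariant functor (trivial action on $\mathcal{A}$) which is Cartesian. Then: (a) $f^*$ is dense; (b) for any category $\mathcal{B}$ and any two functors $a,b:\mathcal{A}'\to\mathcal{B}$, the map $f_!:\operatorname{Hom}(a,b)\to\operatorname{Hom}(af^*,bf^* )$, $u\mapsto uf^*$, between sets of natural transformations admits a canonical retraction $\rho$ (so $f_!$ is injective). Moreover, $v\in\operatorname{Hom}(af^*,bf^* )$ lies in the image of $f_!$ if and only if, for all $A\in\mathcal{A}$, $b(\epsilon_{f^*A})\circ v_{f_*f^*A}=v_A\circ a(\epsilon_{f^*A})$.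
   Context: A pseudo-action of $\Gamma$ on $\mathcal{A}'$: functors $g^*$ ($g\in\Gamma$) with coherent natural isomorphisms $c_{g,h}:h^*g^*\Rightarrow(gh)^*$; equivariance of $f^*$: natural isomorphisms $i_g:g^*f^*\Rightarrow f^*$ compatible with the $c_{g,h}$. $f^*$ is Cartesian if it has a right adjoint $f_*$ (counit $\epsilon$) and for every $C\in\mathcal{A}'$ the morphism $f^*f_*C\to\prod_{g\in\Gamma}g^*C$ with $g$-component $g^*(\epsilon_C)\circ i_g(f_*C)^{-1}$ is an isomorphism. A category is pointed if it has an object which is both initial and final. A functor $F:\mathcal{C}\to\mathcal{D}$ is dense if every object of $\mathcal{D}$ is isomorphic to a retract of $F(C)$ for some $C\in\mathcal{C}$. *)

From mathcomp Require Import all_boot fingroup.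

Set Implicit Arguments.
Unset Strict Implicit.
Unset Printing Implicit Defensive.

Local Open Scope group_scope.

Record Category := {
  Ob :> Type;
  Hom : Ob -> Ob -> Type;
  idm : forall x, Hom x x;
  compm : forall x y z, Hom y z -> Hom x y -> Hom x z;
  comp_id_l : forall x y (f : Hom x y), compm (idm y) f = f;
  comp_id_r : forall x y (f : Hom x y), compm f (idm x) = f;
  comp_assoc : forall x y z w (f : Hom z w) (g : Hom y z) (h : Hom x y),
      compm f (compm g h) = compm (compm f g) h
}.
Arguments Hom {c} x y.
Arguments idm {c} x.
Arguments compm {c x y z} g f.

Record Functor (C D : Category) := {
  fobj :> Ob C -> Ob D;
  fmap : forall x y, Hom x y -> Hom (fobj x) (fobj y);
  fmap_id : forall x, fmap (idm x) = idm (fobj x);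
  fmap_comp : forall x y z (g : Hom y z) (f : Hom x y),
      fmap (compm g f) = compm (fmap g) (fmap f)
}.
Arguments fmap {C D} f0 {x y} f.

Definition IdF (C : Category) : Functor C C.
Proof.
refine (@Build_Functor C C (fun x => x) (fun x y f => f) _ _); by [].
Defined.

Definition Fcomp (C D E : Category) (G : Functor D E) (F : Functor C D) :
  Functor C E.
Proof.
refine (@Build_Functor C E (fun x => G (F x)) (fun x y f => fmap G (fmap F f)) _ _).
- by move=> x; rewrite !fmap_id.
- by move=> x y z g f; rewrite !fmap_comp.
Defined.

Record NatTrans (C D : Category) (F G : Functor C D) := {
  cmp :> forall x, Hom (F x) (G x);
  natural : forall x y (f : Hom x y),
      compm (cmp y) (fmap F f) = compm (fmap G f) (cmp x)
}.

Record NatIso (C D : Category) (F G : Functor C D) := {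
  fwd :> NatTrans F G;
  bwd : forall x, Hom (G x) (F x);
  bwd_fwd : forall x, compm (bwd x) (fwd x) = idm (F x);
  fwd_bwd : forall x, compm (fwd x) (bwd x) = idm (G x)
}.

(* whiskering u |-> u F  (this is f_! in the paper) *)
Definition whisker (C D E : Category) (a b : Functor D E) (u : NatTrans a b)
  (F : Functor C D) : NatTrans (Fcomp a F) (Fcomp b F).
Proof.
refine (@Build_NatTrans C E (Fcomp a F) (Fcomp b F) (fun x => u (F x)) _).
by move=> x y f /=; rewrite natural.
Defined.

Definition is_iso (C : Category) (x y : C) (m : Hom x y) : Prop :=
  exists m' : Hom y x, compm m' m = idm x /\ compm m m' = idm y.

Definition is_initial (C : Category) (z : C) : Prop :=
  forall x : C, exists m : Hom z x, forall m' : Hom z x, m' = m.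
Definition is_final (C : Category) (z : C) : Prop :=
  forall x : C, exists m : Hom x z, forall m' : Hom x z, m' = m.

Definition pointed (C : Category) : Prop :=
  exists z : C, is_initial z /\ is_final z.

Definition is_product (C : Category) (I : Type) (X : I -> C) (P : C)
  (pi : forall i, Hom P (X i)) : Prop :=
  forall (Y : C) (h : forall i, Hom Y (X i)),
    exists m : Hom Y P, (forall i, compm (pi i) m = h i) /\
      forall m' : Hom Y P, (forall i, compm (pi i) m' = h i) -> m' = m.

Arguments is_product {C I} X P pi.

Definition has_finite_products (C : Category) : Prop :=
  forall (I : finType) (X : I -> C),
    exists (P : C) (pi : forall i, Hom P (X i)), is_product X P pi.

Definition is_retract (C : Category) (x y : C) : Prop :=
  exists (s : Hom x y) (r : Hom y x), compm r s = idm x.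

Definition dense (C D : Category) (F : Functor C D) : Prop :=
  forall d : D, exists (c : C) (r : D),
    is_retract r (F c) /\ exists m : Hom d r, is_iso m.

Definition tr (gT : finGroupType) (C : Category) (act : gT -> Functor C C)
  (g h : gT) (p : g = h) (X : C) : Hom (act g X) (act h X) :=
  match p in _ = h' return Hom (act g X) (act h' X) with
  | erefl => idm (act g X) end.

Record PseudoAction (gT : finGroupType) (C : Category) := {
  act : gT -> Functor C C;
  pc : forall g h : gT, NatIso (Fcomp (act h) (act g)) (act (g * h));
  pu : NatIso (IdF C) (act 1);
  pc_assoc : forall (g h k : gT) (X : C),
      compm (pc (g * h) k X) (fmap (act k) (pc g h X)) =
      compm (tr act (mulgA g h k) X) (compm (pc g (h * k) X) (pc h k (act g X)));
  pc_unit_l : forall (g : gT) (X : C),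
      compm (pc 1 g X) (fmap (act g) (pu X)) = tr act (esym (mul1g g)) X;
  pc_unit_r : forall (g : gT) (X : C),
      compm (pc g 1 X) (pu (act g X)) = tr act (esym (mulg1 g)) X
}.

(* Gamma-equivariance of F : C -> C' (trivial action on C): isos
   i_g : g^* F => F compatible with the c_{g,h}. *)
Record Equivariant (gT : finGroupType) (C C' : Category)
  (pa : PseudoAction gT C') (F : Functor C C') := {
  ieq : forall g : gT, NatIso (Fcomp (act pa g) F) F;
  ieq_compat : forall (g h : gT) (X : C),
      compm (ieq (g * h) X) (pc pa g h (F X)) =
      compm (ieq h X) (fmap (act pa h) (ieq g X))
}.

Record RightAdjoint (C D : Category) (F : Functor C D) := {
  radj : Functor D C;
  adj_unit : NatTrans (IdF C) (Fcomp radj F);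
  adj_counit : NatTrans (Fcomp F radj) (IdF D);
  adj_tri1 : forall x : C,
      compm (adj_counit (F x)) (fmap F (adj_unit x)) = idm (F x);
  adj_tri2 : forall y : D,
      compm (fmap radj (adj_counit y)) (adj_unit (radj y)) = idm (radj y)
}.

(* Cartesian: for every C0, the morphism f^* f_* C0 -> prod_g g^* C0 with
   g-component g^*(eps_C0) o i_g(f_* C0)^{-1} is an isomorphism
   (for any choice of product of the family g |-> g^* C0). *)
Definition Cartesian (gT : finGroupType) (C C' : Category)
  (pa : PseudoAction gT C') (F : Functor C C') (eqv : Equivariant pa F)
  (adj : RightAdjoint F) : Prop :=
  forall (C0 : C') (P : C') (pi : forall g : gT, Hom P (act pa g C0)),
    is_product (fun g => act pa g C0) P pi ->
    forall m : Hom (F (radj adj C0)) P,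
      (forall g : gT, compm (pi g) m =
         compm (fmap (act pa g) (adj_counit adj C0)) (bwd (ieq eqv g) (radj adj C0))) ->
      is_iso m.

(* The Cartesian condition identifies f^* f_* C with the product of the g^* C.
   In a pointed category the family (unit C -> 1^* C, zero maps C -> g^* C for
   g <> 1) defines a map C -> prod_g g^* C, natural in C, whose composite with
   the inverse of that identification is a natural section s of the counit.
   Every C is then a retract of f^* f_* C, and rho v := b(eps) o v f_* o a(s)
   retracts whiskering; it inverts whiskering exactly on the v that are
   compatible with the counits. *)

From mathcomp Require Import all_boot fingroup.
From Stdlib Require Import ClassicalEpsilon FunctionalExtensionality ProofIrrelevance.

Set Implicit Arguments.
Unset Strict Implicit.
Unset Printing Implicit Defensive.

Local Notation cid := constructive_indefinite_description.

Lemma natrans_eq (C D : Category) (F G : Functor C D) (u w : NatTrans F G) :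
  (forall x, u x = w x) -> u = w.
Proof.
case: u w => [u nu] [w nw] /= euw.
have euw' := functional_extensionality_dep _ _ euw; subst w.
by rewrite (proof_irrelevance _ nu nw).
Qed.

Lemma natiso_bwd_natural (C D : Category) (F G : Functor C D) (e : NatIso F G)
  x y (f : Hom x y) :
  compm (bwd e y) (fmap G f) = compm (fmap F f) (bwd e x).
Proof.
rewrite -[compm (bwd e y) _]comp_id_r -(fwd_bwd e x) comp_assoc.
rewrite -[compm (compm (bwd e y) _) _]comp_assoc -natural.
by rewrite !comp_assoc bwd_fwd comp_id_l.
Qed.

Lemma natiso_bwd_fwdK (C D : Category) (F G : Functor C D) (e : NatIso F G)
  x y (f : Hom y (F x)) :
  compm (bwd e x) (compm (e x) f) = f.
Proof. by rewrite comp_assoc bwd_fwd comp_id_l. Qed.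

Section Isomorphisms.
Variable C : Category.

Lemma natiso_is_iso (D : Category) (F G : Functor D C) (e : NatIso F G) x :
  is_iso (e x).
Proof. by exists (bwd e x); rewrite bwd_fwd fwd_bwd. Qed.

Lemma is_iso_comp (x y z : C) (g : Hom y z) (f : Hom x y) :
  is_iso f -> is_iso g -> is_iso (compm g f).
Proof.
move=> [f' [f'f ff']] [g' [g'g gg']]; exists (compm f' g'); split.
  by rewrite -comp_assoc (comp_assoc g') g'g comp_id_l.
by rewrite -comp_assoc (comp_assoc f) ff' comp_id_l.
Qed.

Definition iso_inv (x y : C) (m : Hom x y) (m_iso : is_iso m) : Hom y x :=
  proj1_sig (cid _ m_iso).

Lemma iso_invK (x y : C) (m : Hom x y) (m_iso : is_iso m) :
  compm (iso_inv m_iso) m = idm x.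
Proof. exact: (proj1 (proj2_sig (cid _ m_iso))). Qed.

Lemma iso_Kinv (x y : C) (m : Hom x y) (m_iso : is_iso m) :
  compm m (iso_inv m_iso) = idm y.
Proof. exact: (proj2 (proj2_sig (cid _ m_iso))). Qed.

Lemma iso_monic (x y w : C) (m : Hom x y) (u v : Hom w x) :
  is_iso m -> compm m u = compm m v -> u = v.
Proof.
move=> m_iso muv; rewrite -[u]comp_id_l -[v]comp_id_l -(iso_invK m_iso).
by rewrite -!comp_assoc muv.
Qed.

End Isomorphisms.

Section ZeroMorphisms.
Variables (C : Category) (C_pointed : pointed C).

Let zero_obj := cid _ C_pointed.
Let z : C := proj1_sig zero_obj.

Let from_zero (y : C) : Hom z y :=
  proj1_sig (cid _ (proj1 (proj2_sig zero_obj) y)).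
Let to_zero (x : C) : Hom x z :=
  proj1_sig (cid _ (proj2 (proj2_sig zero_obj) x)).

Let from_zero_unique (y : C) (m : Hom z y) : m = from_zero y.
Proof.
exact: (proj2_sig (cid _ (proj1 (proj2_sig zero_obj) y))).
Qed.

Let to_zero_unique (x : C) (m : Hom x z) : m = to_zero x.
Proof.
exact: (proj2_sig (cid _ (proj2 (proj2_sig zero_obj) x))).
Qed.

Definition zero_hom (x y : C) : Hom x y := compm (from_zero y) (to_zero x).

Lemma comp_zero_hom_l (x y w : C) (f : Hom y w) : compm f (zero_hom x y) = zero_hom x w.
Proof. by rewrite /zero_hom comp_assoc (from_zero_unique (compm f _)). Qed.

Lemma comp_zero_hom_r (x y w : C) (f : Hom x y) : compm (zero_hom y w) f = zero_hom x w.
Proof. by rewrite /zero_hom -comp_assoc (to_zero_unique (compm _ f)). Qed.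

End ZeroMorphisms.

Section Products.
Variables (C : Category) (I : Type) (X : I -> C) (P : C) (pi : forall i, Hom P (X i)).
Hypothesis P_product : is_product X P pi.

Definition product_lift (y : C) (h : forall i, Hom y (X i)) : Hom y P :=
  proj1_sig (cid _ (P_product h)).

Lemma product_lift_proj (y : C) (h : forall i, Hom y (X i)) i :
  compm (pi i) (product_lift h) = h i.
Proof. exact: (proj1 (proj2_sig (cid _ (P_product h)))). Qed.

Lemma product_hom_ext (y : C) (u w : Hom y P) :
  (forall i, compm (pi i) u = compm (pi i) w) -> u = w.
Proof.
move=> euw; have [m [_ m_unique]] := P_product (fun i => compm (pi i) w).
by rewrite (m_unique u euw) (m_unique w (fun i => erefl)).
Qed.

End Products.

Section FiniteProducts.
Variables (C : Category) (C_products : has_finite_products C) (I : finType) (X : I -> C).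

Let product_data := cid _ (C_products X).

Definition finite_product : C := projT1 product_data.

Definition finite_product_proj : forall i, Hom finite_product (X i) :=
  proj1_sig (cid _ (projT2 product_data)).

Lemma finite_product_is_product : is_product X finite_product finite_product_proj.
Proof. exact: (proj2_sig (cid _ (projT2 product_data))). Qed.

End FiniteProducts.

Section CounitSection.
Variables (gT : finGroupType) (A A' : Category) (pa : PseudoAction gT A').
Variables (fs : Functor A A') (eqv : Equivariant pa fs) (adj : RightAdjoint fs).
Hypotheses (A'_pointed : pointed A') (A'_products : has_finite_products A').
Hypothesis fs_cartesian : Cartesian eqv adj.

Local Notation fsfp := (Fcomp fs (radj adj)).
Local Notation eps := (adj_counit adj).

Let P (x : A') : A' := finite_product A'_products (fun g => act pa g x).
Let pi (x : A') : forall g, Hom (P x) (act pa g x) :=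
  finite_product_proj A'_products (fun g => act pa g x).
Let P_product (x : A') : is_product _ (P x) (pi x) :=
  @finite_product_is_product A' A'_products gT (fun g => act pa g x).
Arguments P_product x : clear implicits.

Definition cartesian_component (x : A') (g : gT) : Hom (fsfp x) (act pa g x) :=
  compm (fmap (act pa g) (eps x)) (bwd (ieq eqv g) (radj adj x)).

Lemma cartesian_component_natural (x y : A') (f : Hom x y) g :
  compm (cartesian_component y g) (fmap fsfp f) =
  compm (fmap (act pa g) f) (cartesian_component x g).
Proof.
rewrite /cartesian_component /= -comp_assoc (natiso_bwd_natural (ieq eqv g)) /= comp_assoc.
by rewrite -fmap_comp; have /= -> := natural eps f; rewrite fmap_comp -comp_assoc.
Qed.

Definition cartesian_comparison (x : A') : Hom (fsfp x) (P x) :=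
  product_lift (P_product x) (cartesian_component x).

Lemma cartesian_comparison_is_iso (x : A') : is_iso (cartesian_comparison x).
Proof. exact: fs_cartesian (P_product x) _ (product_lift_proj (P_product x) _). Qed.

Definition cartesian_iso (x : A') : Hom (fsfp x) (P x) :=
  compm (cartesian_comparison x)
    (compm (ieq eqv 1%g (radj adj x)) (pu pa (fsfp x))).

Lemma cartesian_iso_is_iso (x : A') : is_iso (cartesian_iso x).
Proof.
apply: is_iso_comp; last exact: cartesian_comparison_is_iso.
apply: is_iso_comp; [exact: (natiso_is_iso (pu pa)) | exact: natiso_is_iso].
Qed.

Lemma counit_cartesian_iso (x : A') :
  eps x = compm (bwd (pu pa) x) (compm (pi x 1%g) (cartesian_iso x)).
Proof.
rewrite /cartesian_iso [compm (pi x 1%g) _]comp_assoc (product_lift_proj (P_product _)).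
rewrite /cartesian_component -comp_assoc (natiso_bwd_fwdK (ieq eqv 1%g)).
have /= <- := natural (pu pa) (eps x).
by rewrite (natiso_bwd_fwdK (pu pa)).
Qed.

Lemma cartesian_iso_natural (x y : A') (f : Hom x y) g :
  compm (pi y g) (compm (cartesian_iso y) (fmap fsfp f)) =
  compm (fmap (act pa g) f) (compm (pi x g) (cartesian_iso x)).
Proof.
have unit_natural : compm (ieq eqv 1%g (radj adj y)) (compm (pu pa (fsfp y)) (fmap fsfp f)) =
    compm (fmap fsfp f) (compm (ieq eqv 1%g (radj adj x)) (pu pa (fsfp x))).
  have /= -> := natural (pu pa) (fmap fsfp f).
  rewrite comp_assoc; have /= -> := natural (ieq eqv 1%g) (fmap (radj adj) f).
  by rewrite -comp_assoc.
rewrite /cartesian_iso -!comp_assoc unit_natural.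
rewrite [compm (pi y g) _]comp_assoc (product_lift_proj (P_product _)).
rewrite [compm (pi x g) _]comp_assoc (product_lift_proj (P_product _)).
by rewrite [LHS]comp_assoc cartesian_component_natural -comp_assoc.
Qed.

Definition unit_or_zero (x : A') (g : gT) : Hom x (act pa g x) :=
  match @eqP _ 1%g g with
  | ReflectT e => compm (tr (act pa) e x) (pu pa x)
  | ReflectF _ => zero_hom A'_pointed _ _
  end.

Lemma unit_or_zero1 (x : A') : unit_or_zero x 1%g = pu pa x.
Proof.
rewrite /unit_or_zero; case: eqP => [e|//].
by rewrite (eq_irrelevance e erefl) /= comp_id_l.
Qed.

Lemma unit_or_zero_natural (x y : A') (f : Hom x y) g :
  compm (fmap (act pa g) f) (unit_or_zero x g) = compm (unit_or_zero y g) f.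
Proof.
rewrite /unit_or_zero; case: eqP => [e|_]; last first.
  by rewrite comp_zero_hom_l comp_zero_hom_r.
by subst g; rewrite /= !comp_id_l; have /= -> := natural (pu pa) f.
Qed.

Definition counit_section (x : A') : Hom x (fsfp x) :=
  compm (iso_inv (cartesian_iso_is_iso x)) (product_lift (P_product x) (unit_or_zero x)).

Lemma cartesian_iso_counit_section (x : A') :
  compm (cartesian_iso x) (counit_section x) = product_lift (P_product x) (unit_or_zero x).
Proof. by rewrite /counit_section comp_assoc iso_Kinv comp_id_l. Qed.

Lemma counit_sectionK (x : A') : compm (eps x) (counit_section x) = idm x.
Proof.
rewrite counit_cartesian_iso -[compm (compm _ _) (counit_section x)]comp_assoc.
rewrite -[compm (compm _ _) (counit_section x)]comp_assoc cartesian_iso_counit_section.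
by rewrite (product_lift_proj (P_product _)) unit_or_zero1 (bwd_fwd (pu pa)).
Qed.

Lemma counit_section_natural (x y : A') (f : Hom x y) :
  compm (counit_section y) f = compm (fmap fsfp f) (counit_section x).
Proof.
apply: (iso_monic (cartesian_iso_is_iso y)); apply: (product_hom_ext (P_product y)) => g.
rewrite [compm (cartesian_iso y) (compm (counit_section y) f)]comp_assoc.
rewrite cartesian_iso_counit_section [LHS]comp_assoc (product_lift_proj (P_product _)).
rewrite [compm (cartesian_iso y) _]comp_assoc [RHS]comp_assoc cartesian_iso_natural.
rewrite -[RHS]comp_assoc -[compm (compm (pi x g) _) _]comp_assoc.
rewrite cartesian_iso_counit_section (product_lift_proj (P_product _)).
by rewrite unit_or_zero_natural.
Qed.

End CounitSection.

Section NaturalSection.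
Variables (A A' : Category) (F : Functor A A') (G : Functor A' A).
Variables (eps : NatTrans (Fcomp F G) (IdF A')) (s : forall x : A', Hom x (F (G x))).
Hypothesis sK : forall x, compm (eps x) (s x) = idm x.
Hypothesis s_natural :
  forall x y (f : Hom x y), compm (s y) f = compm (fmap F (fmap G f)) (s x).

Lemma dense_of_section : dense F.
Proof.
move=> x; exists (G x), x; split; first by exists (s x), (eps x).
by exists (idm x), (idm x); rewrite comp_id_l.
Qed.

Variables (B : Category) (a b : Functor A' B).

Definition descend_cmp (v : NatTrans (Fcomp a F) (Fcomp b F)) (x : A') : Hom (a x) (b x) :=
  compm (fmap b (eps x)) (compm (v (G x)) (fmap a (s x))).

Lemma descend_natural (v : NatTrans (Fcomp a F) (Fcomp b F)) x y (f : Hom x y) :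
  compm (descend_cmp v y) (fmap a f) = compm (fmap b f) (descend_cmp v x).
Proof.
rewrite /descend_cmp -!comp_assoc -fmap_comp s_natural fmap_comp.
rewrite [compm (v (G y)) _]comp_assoc; have /= -> := natural v (fmap G f).
rewrite -[compm (compm (fmap b _) (v _)) _]comp_assoc [LHS]comp_assoc -fmap_comp.
by have /= -> := natural eps f; rewrite fmap_comp -comp_assoc.
Qed.

Definition descend (v : NatTrans (Fcomp a F) (Fcomp b F)) : NatTrans a b :=
  Build_NatTrans (descend_natural v).

Lemma descend_whisker (u : NatTrans a b) : descend (whisker u F) = u.
Proof.
apply: natrans_eq => x /=; rewrite /descend_cmp /= comp_assoc.
have /= <- := natural u (eps x).
by rewrite -comp_assoc -fmap_comp sK fmap_id comp_id_r.
Qed.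

Definition counit_compatible (v : NatTrans (Fcomp a F) (Fcomp b F)) : Prop :=
  forall x : A, compm (fmap b (eps (F x))) (v (G (F x))) = compm (v x) (fmap a (eps (F x))).

Lemma whisker_counit_compatible (u : NatTrans a b) : counit_compatible (whisker u F).
Proof. by move=> x /=; have /= -> := natural u (eps (F x)). Qed.

Lemma whisker_descend (v : NatTrans (Fcomp a F) (Fcomp b F)) :
  counit_compatible v -> whisker (descend v) F = v.
Proof.
move=> v_compatible; apply: natrans_eq => x /=.
rewrite /descend_cmp comp_assoc v_compatible -comp_assoc -fmap_comp sK fmap_id.
exact: comp_id_r.
Qed.

End NaturalSection.

Theorem lemma2p8 (gT : finGroupType) (A A' : Category)
  (pa : PseudoAction gT A') (fs : Functor A A')
  (eqv : Equivariant pa fs) (adj : RightAdjoint fs) :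
  pointed A' -> has_finite_products A' -> Cartesian eqv adj ->
  dense fs /\
  (forall (B : Category) (a b : Functor A' B),
     (exists rho : NatTrans (Fcomp a fs) (Fcomp b fs) -> NatTrans a b,
        forall u : NatTrans a b, rho (whisker u fs) = u) /\
     (forall v : NatTrans (Fcomp a fs) (Fcomp b fs),
        (exists u : NatTrans a b, whisker u fs = v) <->
        (forall X : A,
           compm (fmap b (adj_counit adj (fs X))) (v (radj adj (fs X))) =
           compm (v X) (fmap a (adj_counit adj (fs X)))))).
Proof.
move=> A'_pointed A'_products fs_cartesian.
have sK := counit_sectionK A'_pointed A'_products fs_cartesian.
have s_natural := counit_section_natural A'_pointed A'_products fs_cartesian.
split; first exact: dense_of_section sK.
move=> B a b; split.
  exists (fun v => descend (adj_counit adj) s_natural v) => u /=.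
  exact: (descend_whisker sK s_natural u).
move=> v; split; first by move=> [u <-]; apply: whisker_counit_compatible.
by move=> v_compatible; exists (descend (adj_counit adj) s_natural v); apply: whisker_descend.
Qed.
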